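(* Let $R$ be a $*$-ring. Then $R$ is strongly $J$-$*$-clean if and only if (1) $R$ is strongly $*$-clean, and (2) for every maximal ideal $M$ of $R$, $1$ is not the sum of two units in $R/M$.
   Context: All rings are associative with identity. A $*$-ring is a ring $R$ with an involution $*$, i.e. a map $a\mapsto a^*$ with $(a+b)^*=a^*+b^*$, $(ab)^*=b^*a^*$, $(a^* )^*=a$. $U(R)$ denotes the group of units and $J(R)$ the Jacobson radical of $R$. A projection is an element $e$ with $e^2=e=e^*$. $R$ is strongly $J$-$*$-clean if every $a\in R$ can be written $a=e+u$ with $e$ a projection, $u\in J(R)$ and $ae=ea$. $R$ is strongly $*$-clean if every $a\in R$ can be written $a=e+u$ with $e$ a projection, $u\in U(R)$ and $eu=ue$. Maximal ideals are two-sided. *)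

From mathcomp Require Import all_boot all_algebra.
Set Implicit Arguments. Unset Strict Implicit. Unset Printing Implicit Defensive.
Import GRing.Theory.
Local Open Scope ring_scope.

Section Defs.
Variable R : pzRingType.

Definition is_involution (star : R -> R) : Prop :=
  [/\ forall a b, star (a + b) = star a + star b,
      forall a b, star (a * b) = star b * star a
    & forall a, star (star a) = a].

Definition is_unit (u : R) : Prop := exists v : R, u * v = 1 /\ v * u = 1.

Definition is_projection (star : R -> R) (e : R) : Prop :=
  e * e = e /\ star e = e.

Definition add_subgroup (I : R -> Prop) : Prop :=
  I 0 /\ forall x y, I x -> I y -> I (x - y).

Definition left_ideal (I : R -> Prop) : Prop :=
  add_subgroup I /\ forall r x, I x -> I (r * x).

Definition two_sided_ideal (I : R -> Prop) : Prop :=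
  [/\ add_subgroup I, forall r x, I x -> I (r * x) & forall r x, I x -> I (x * r)].

Definition maximal_left_ideal (I : R -> Prop) : Prop :=
  [/\ left_ideal I, ~ I 1 &
      forall K, left_ideal K -> (forall x, I x -> K x) -> ~ K 1 ->
        forall x, K x -> I x].

Definition maximal_ideal (M : R -> Prop) : Prop :=
  [/\ two_sided_ideal M, ~ M 1 &
      forall K, two_sided_ideal K -> (forall x, M x -> K x) -> ~ K 1 ->
        forall x, K x -> M x].

Definition jacobson (x : R) : Prop :=
  forall I, maximal_left_ideal I -> I x.

Definition strongly_J_star_clean (star : R -> R) : Prop :=
  forall a : R, exists e u : R,
    [/\ a = e + u, is_projection star e, jacobson u & a * e = e * a].

Definition strongly_star_clean (star : R -> R) : Prop :=
  forall a : R, exists e u : R,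
    [/\ a = e + u, is_projection star e, is_unit u & e * u = u * e].

(* x + M is a unit of the quotient ring R/M *)
Definition unit_mod (M : R -> Prop) (x : R) : Prop :=
  exists y : R, M (x * y - 1) /\ M (y * x - 1).

Definition one_sum_two_units_mod (M : R -> Prop) : Prop :=
  exists u v : R, [/\ unit_mod M u, unit_mod M v & M (1 - (u + v))].

End Defs.

From mathcomp Require Import all_boot all_algebra.
From mathcomp Require classical_sets.
From Stdlib Require Import Classical.
Set Implicit Arguments. Unset Strict Implicit. Unset Printing Implicit Defensive.
Import GRing.Theory.
Local Open Scope ring_scope.

(* If [R] is strongly J-*-clean, then [x^2 - x] lies in [J(R)] for every [x],
   and [J(R)] lies in every maximal ideal [M]: every unit of [R/M] is then [1],
   so [1] is not a sum of two of them; shifting [a - 1 = e + j] to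
   [a = e + (1 + j)] gives strong *-cleanness.
   Conversely, in a strongly *-clean ring every idempotent is a projection,
   hence central.  For a maximal left ideal [L] the core [{x | xR <= L}] is then
   a maximal ideal modulo which every element outside [L] is invertible; so a
   unit [w] with [w - 1] outside [L] would make [1 = w + (1 - w)] a sum of two
   units modulo the core.  Thus [w - 1] and [2] lie in every maximal left ideal,
   i.e. in [J(R)], and [a = e + w = (1 - e) + ((w - 1) + 2e)] is strongly
   J-*-clean. *)

Section Ideals.
Variable R : pzRingType.
Implicit Types (I L M : R -> Prop) (e j r s u w x y z : R).

Lemma add_subgroupN I x : add_subgroup I -> I x -> I (- x).
Proof. by move=> [I0 IB] Ix; rewrite -sub0r; apply: IB. Qed.

Lemma add_subgroupD I x y : add_subgroup I -> I x -> I y -> I (x + y).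
Proof.
by move=> IG Ix Iy; rewrite -[y]opprK; apply: IG.2 => //; apply: add_subgroupN.
Qed.

Lemma maximal_left_ideal_comax L x : maximal_left_ideal L -> ~ L x ->
  exists l r, L l /\ 1 = l + r * x.
Proof.
move=> [[[L0 LB] LM] L1 Lmax] Lx.
pose K z := exists l r, L l /\ z = l + r * x.
have K_left : left_ideal K.
  split; first split.
  - by exists 0, 0; rewrite mul0r addr0.
  - move=> _ _ [l1 [r1 [Ll1 ->]]] [l2 [r2 [Ll2 ->]]].
    exists (l1 - l2), (r1 - r2); split; first exact: LB.
    by rewrite mulrBl opprD addrACA.
  - move=> s _ [l [r [Ll ->]]]; exists (s * l), (s * r); split; first exact: LM.
    by rewrite mulrDr mulrA.
have [[l [r [Ll E]]]|K1] := classic (K 1); first by exists l, r.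
exfalso; apply: Lx; apply: (Lmax K K_left) => //.
  by move=> z Lz; exists z, 0; rewrite mul0r addr0.
by exists 0, 1; rewrite mul1r add0r.
Qed.

(* Zorn's lemma for the sets closed under subtraction and left multiplication,
   avoiding [1], and containing [I] as soon as they are nonempty: the last
   clause lets the union of the empty chain qualify. *)
Lemma exists_maximal_left_ideal I : left_ideal I -> ~ I 1 ->
  exists L, maximal_left_ideal L /\ forall x, I x -> L x.
Proof.
move=> [[I0 IB] IM] I1.
pose P (A : R -> Prop) := [/\ forall x y, A x -> A y -> A (x - y),
  forall r x, A x -> A (r * x), ~ A 1 & (exists x, A x) -> forall x, I x -> A x].
have [A [[AB AM A1 AI] Amax]] : exists A, P A /\
    forall B, classical_sets.proper A B -> ~ P B.
  apply: classical_sets.Zorn_bigcup => F FP Ftot; split.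
  - move=> x y [X FX Xx] [Y FY Yy].
    have [XY|YX] := Ftot X Y FX FY.
    + by exists Y => //; case: (FP Y FY) => YB _ _ _; apply: YB => //; apply: XY.
    + by exists X => //; case: (FP X FX) => XB _ _ _; apply: XB => //; apply: YX.
  - move=> r x [X FX Xx]; exists X => //.
    by case: (FP X FX) => _ XM _ _; apply: XM.
  - by move=> [X FX X1]; case: (FP X FX) => _ _ + _; apply.
  - move=> [z [X FX Xz]] x Ix; exists X => //; case: (FP X FX) => _ _ _ XI.
    by apply: XI => //; exists z.
have PI : P I by split=> // _.
have [a Aa] : exists x, A x.
  apply: NNPP => A_empty; apply: (Amax I) => //; split.
    by move=> x Ax; exfalso; apply: A_empty; exists x.
  by move=> IA; apply: A_empty; exists 0; apply: IA.
have A0 : A 0 by rewrite -(subrr a); apply: AB.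
have AI' := AI (ex_intro _ a Aa).
exists A; split=> //; split=> [|//|]; first by split; first split.
move=> K [[K0 KB] KM] AK K1 x Kx; apply: NNPP => Ax.
apply: (Amax K); first by split=> // AK'; apply: Ax; apply: AK'.
by split=> // _ z Iz; apply: AK; apply: AI'.
Qed.

Lemma jacobson0 : jacobson (0 : R).
Proof. by move=> L [[[]]]. Qed.

Lemma jacobsonB x y : jacobson x -> jacobson y -> jacobson (x - y).
Proof.
move=> Jx Jy L HL; case: (HL) => [[[_ LB] _] _ _].
by apply: LB; [apply: Jx | apply: Jy].
Qed.

Lemma jacobson_add_subgroup : add_subgroup (@jacobson R).
Proof. by split; [apply: jacobson0 | apply: jacobsonB]. Qed.

Lemma jacobsonMl r x : jacobson x -> jacobson (r * x).
Proof. by move=> Jx L HL; case: (HL) => [[_ LM] _ _]; apply: LM; apply: Jx. Qed.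

Lemma jacobson_left_inv u : jacobson u -> exists y, y * (1 - u) = 1.
Proof.
move=> Ju; pose I z := exists r, z = r * (1 - u).
have [[r E]|I1] := classic (I 1); first by exists r.
have I_left : left_ideal I.
  split; first split.
  - by exists 0; rewrite mul0r.
  - by move=> _ _ [r1 ->] [r2 ->]; exists (r1 - r2); rewrite mulrBl.
  - by move=> s _ [r ->]; exists (s * r); rewrite mulrA.
have [L [HL IL]] := exists_maximal_left_ideal I_left I1.
have LG : add_subgroup L by case: HL => -[].
have L1u : L (1 - u) by apply: IL; exists 1; rewrite mul1r.
have Lu : L u by apply: Ju.
case: HL => _ L1 _; exfalso; apply: L1.
by rewrite -(subrK u 1); apply: add_subgroupD.
Qed.

Lemma jacobsonP x : (forall r, exists y, y * (1 - r * x) = 1) -> jacobson x.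
Proof.
move=> inv L HL; apply: NNPP => Lx.
have [l [r [Ll E]]] := maximal_left_ideal_comax HL Lx.
have [y yE] := inv r.
case: HL => [[_ LM] L1 _]; apply: L1.
by rewrite -yE E addrK; apply: LM.
Qed.

Lemma jacobsonMr x s : jacobson x -> jacobson (x * s).
Proof.
move=> Jx; apply: jacobsonP => r.
have [c cE] := jacobson_left_inv (jacobsonMl (s * r) Jx).
have csrx : c * (s * r * x) = c - 1 by rewrite -cE mulrBr mulr1 opprB addrC subrK.
exists (1 + r * x * c * s).
rewrite mulrBr mulr1 mulrDl mul1r.
have -> : r * x * c * s * (r * (x * s)) = r * x * (c * (s * r * x)) * s.
  by rewrite !mulrA.
by rewrite csrx mulrBr mulr1 mulrBl !mulrA [X in _ - X]addrC subrK addrK.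
Qed.

Lemma jacobson_unit1B u : jacobson u -> is_unit (1 - u).
Proof.
move=> Ju; have [y yE] := jacobson_left_inv Ju.
have y1B : y = 1 - - (y * u) by rewrite opprK -yE mulrBr mulr1 subrK.
have [z zE] :=
  jacobson_left_inv (add_subgroupN jacobson_add_subgroup (jacobsonMl y Ju)).
rewrite -y1B in zE.
have z_eq : 1 - u = z.
  by have := congr1 (fun t => z * t) yE; rewrite /= mulrA zE mul1r mulr1.
by exists y; split; [rewrite z_eq | ].
Qed.

Lemma jacobson_sub_maximal_ideal M x : maximal_ideal M -> jacobson x -> M x.
Proof.
move=> [[[M0 MB] Ml Mr] M1 Mmax] Jx; apply: NNPP => Mx.
pose K z := exists m j, [/\ M m, jacobson j & z = m + j].
have K_ideal : two_sided_ideal K.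
  split; first split.
  - by exists 0, 0; split; [|apply: jacobson0|rewrite addr0].
  - move=> _ _ [m1 [j1 [Mm1 Jj1 ->]]] [m2 [j2 [Mm2 Jj2 ->]]].
    exists (m1 - m2), (j1 - j2); split; [exact: MB | exact: jacobsonB|].
    by rewrite opprD addrACA.
  - move=> s _ [m [j [Mm Jj ->]]]; exists (s * m), (s * j).
    by split; [exact: Ml | exact: jacobsonMl | rewrite mulrDr].
  - move=> s _ [m [j [Mm Jj ->]]]; exists (m * s), (j * s).
    by split; [exact: Mr | exact: jacobsonMr | rewrite mulrDl].
have [[m [j [Mm Jj E]]]|K1] := classic (K 1).
  have [y [yE _]] := jacobson_unit1B Jj.
  by apply: M1; rewrite -yE E addrK; apply: Mr.
apply: Mx; apply: (Mmax K K_ideal) => //.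
  by move=> z Mz; exists z, 0; split; [|apply: jacobson0|rewrite addr0].
by exists 0, x; split; [|exact: Jx|rewrite add0r].
Qed.

Lemma jacobson_sqrB_idem_add e j : e * e = e -> jacobson j ->
  jacobson ((e + j) * (e + j) - (e + j)).
Proof.
move=> ee Jj; have -> : (e + j) * (e + j) - (e + j) = j * e + (e + j) * j - j.
  rewrite [(e + j) * (e + j)]mulrDr [(e + j) * e]mulrDl ee.
  by rewrite [e + j * e]addrC addrAC addrKA addrAC.
apply: jacobsonB => //; apply: (add_subgroupD jacobson_add_subgroup).
  exact: jacobsonMr.
exact: jacobsonMl.
Qed.

Lemma unit_mod_unit M u : add_subgroup M -> is_unit u -> unit_mod M u.
Proof. by move=> [M0 _] [v [uv vu]]; exists v; rewrite uv vu subrr. Qed.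

Lemma unit_modN M x : unit_mod M x -> unit_mod M (- x).
Proof. by move=> [y xy]; exists (- y); rewrite !mulrNN. Qed.

Lemma unit_mod_left_right M x y z : two_sided_ideal M ->
  M (z * x - 1) -> M (x * y - 1) -> unit_mod M x.
Proof.
move=> [MG Ml Mr] zx xy; exists y; split=> //.
have yz : M (y - z).
  have <- : z * (x * y - 1) - (z * x - 1) * y = y - z.
    by rewrite mulrBr mulrBl mulr1 mul1r mulrA opprB addrC addrA subrK.
  by apply: MG.2; [apply: Ml | apply: Mr].
by rewrite -(subrKA (z * x)) -mulrBl; apply: add_subgroupD => //; apply: Mr.
Qed.

Lemma unit_mod_idem M w : two_sided_ideal M -> M (w * w - w) -> unit_mod M w ->
  M (w - 1).
Proof.
move=> [MG Ml Mr] ww [y [wy _]].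
have -> : w - 1 = (w * w - w) * y - w * (w * y - 1) + (w * y - 1).
  by rewrite mulrBl mulrBr mulr1 !mulrA opprB [w * w * y - _ + _]addrC !subrKA.
by apply: add_subgroupD => //; apply: MG.2; [apply: Mr | apply: Ml].
Qed.

Definition ideal_core L x := forall r, L (x * r).

Lemma ideal_core_sub L x : ideal_core L x -> L x.
Proof. by move=> Lx; rewrite -[x]mulr1. Qed.

Lemma ideal_core_two_sided L : left_ideal L -> two_sided_ideal (ideal_core L).
Proof.
move=> [[L0 LB] LM]; split; first split.
- by move=> r; rewrite mul0r.
- by move=> x y Lx Ly r; rewrite mulrBl; apply: LB.
- by move=> r x Lx s; rewrite -mulrA; apply: LM.
- by move=> r x Lx s; rewrite -mulrA.
Qed.

End Ideals.

Section Involution.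
Variables (R : pzRingType) (star : R -> R).
Hypothesis star_inv : is_involution star.
Implicit Types (e p q r w x z : R) (L M : R -> Prop).

Lemma star0 : star 0 = 0.
Proof.
by case: star_inv => starD _ _; apply: (@addrI _ (star 0)); rewrite -starD !addr0.
Qed.

Lemma starN x : star (- x) = - star x.
Proof.
case: star_inv => starD _ _; apply: (@addrI _ (star x)).
by rewrite -starD !subrr star0.
Qed.

Lemma star1 : star 1 = 1.
Proof.
case: star_inv => _ starM starK.
by have := starM 1 (star 1); rewrite !mul1r starK mul1r.
Qed.

Lemma star1B x : star (1 - x) = 1 - star x.
Proof. by case: star_inv => starD _ _; rewrite starD starN star1. Qed.

Lemma projection1B e : is_projection star e -> is_projection star (1 - e).
Proof.
case=> ee se; split; last by rewrite star1B se.
by rewrite mulrBl mul1r mulrBr mulr1 ee subrr subr0.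
Qed.

Section StronglyStarClean.
Hypothesis star_clean : strongly_star_clean star.
Hypothesis no_unit_pair : forall M, maximal_ideal M -> ~ one_sum_two_units_mod M.

Lemma idempotent_projection q : q * q = q -> star q = q.
Proof.
move=> qq; have [f [u [qE [ff sf] [v [uv vu]] fu]]] := star_clean q.
have fq : f * q = q * f by rewrite qE mulrDl mulrDr ff fu.
have uE : u = q - f by rewrite qE addrC addKr.
have fq0 : (1 - f - q) * u = 0.
  by rewrite uE !mulrBl !mulrBr !mul1r fq ff qq opprB addrA subrK subrr.
have fq1 : 1 - f - q = 0 by rewrite -[LHS]mulr1 -[X in _ * X]uv mulrA fq0 mul0r.
have -> : q = 1 - f by apply/eqP; rewrite eq_sym -subr_eq0 fq1.
by rewrite star1B sf.
Qed.

(* [p + p r (1 - p)] is idempotent, hence self-adjoint, which forces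
   [p r (1 - p) = 0]. *)
Lemma projection_corner p r : is_projection star p -> p * r = p * r * p.
Proof.
move=> [pp sp]; case: star_inv => starD starM _.
set x := p * r * (1 - p).
have px : p * x = x by rewrite /x !mulrA pp.
have xp : x * p = 0 by rewrite /x -mulrA mulrBl mul1r pp subrr mulr0.
have xx : x * x = 0 by rewrite {2}/x !mulrA xp !mul0r.
have pxpx : (p + x) * (p + x) = p + x.
  by rewrite mulrDl !mulrDr pp px xp xx !addr0.
have := idempotent_projection pxpx; rewrite starD sp => /addrI sx.
have : p * x = 0.
  by rewrite -sx /x !starM sp star1B sp mulrA mulrBr mulr1 pp subrr mul0r.
by rewrite px /x mulrBr mulr1 => /eqP; rewrite subr_eq0 => /eqP.
Qed.

Lemma projection_central p r : is_projection star p -> p * r = r * p.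
Proof.
move=> Pp; have := projection_corner r (projection1B Pp).
rewrite !mulrBl !mul1r !mulrBr !mulr1 -(projection_corner r Pp) subrr subr0.
by move=> /addrI /oppr_inj.
Qed.

Section MaximalLeftIdeal.
Variable L : R -> Prop.
Hypothesis L_max : maximal_left_ideal L.

Let L_left : left_ideal L. Proof. by case: L_max. Qed.
Let L_group : add_subgroup L. Proof. by case: L_left. Qed.
Let L_mull r x : L x -> L (r * x). Proof. by case: L_left => _; apply. Qed.
Let core_ideal : two_sided_ideal (ideal_core L).
Proof. exact: ideal_core_two_sided. Qed.
Let core_group : add_subgroup (ideal_core L). Proof. by case: core_ideal. Qed.
Let core_mull r x : ideal_core L x -> ideal_core L (r * x).
Proof. by case: core_ideal => _ + _; apply. Qed.
Let core_mulr r x : ideal_core L x -> ideal_core L (x * r).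
Proof. by case: core_ideal => _ _; apply. Qed.

Lemma projection_ideal_core e : is_projection star e -> L e -> ideal_core L e.
Proof. by move=> Pe Le r; rewrite (projection_central r Pe); apply: L_mull. Qed.

Lemma maximal_left_ideal_projection e : is_projection star e -> L e \/ L (1 - e).
Proof.
move=> Pe; have [Le|Le] := classic (L e); [by left | right].
have [l [r [Ll E]]] := maximal_left_ideal_comax L_max Le.
have e'_re : (1 - e) * (r * e) = 0.
  by rewrite -(projection_central r Pe) mulrA mulrBl mul1r Pe.1 subrr mul0r.
have := congr1 (fun t => (1 - e) * t) E.
by rewrite /= mulr1 mulrDr e'_re addr0 => ->; apply: L_mull.
Qed.

(* Write [z = e + t] strongly *-clean; the central projection [e] or [1 - e]
   lies in [L], hence in its core. *)
Lemma unit_near_ideal_core z : exists t, is_unit t /\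
  (ideal_core L (z - t) \/ ideal_core L (z - 1 - t)).
Proof.
have [e [t [zE Pe Ut _]]] := star_clean z.
exists t; split=> //.
have [Le|Le] := maximal_left_ideal_projection Pe.
  by left; rewrite zE addrK; apply: projection_ideal_core.
right; have -> : z - 1 - t = - (1 - e) by rewrite zE addrAC addrK opprB.
apply: (add_subgroupN core_group).
by apply: projection_ideal_core => //; apply: projection1B.
Qed.

Lemma left_inverse_mod_ideal_core x : ~ L x -> exists z, ideal_core L (z * x - 1).
Proof.
move=> Lx; have [l [r [Ll E]]] := maximal_left_ideal_comax L_max Lx.
have [t [[t' [tt' t't]] [rxt|rxt]]] := unit_near_ideal_core (r * x).
  exists (t' * r); rewrite -mulrA -t't -mulrBr.
  exact: core_mull.
case: L_max => _ L1 _; exfalso; apply: L1.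
have Lt : L (- t).
  have <- : l + (r * x - 1 - t) = - t.
    by rewrite E opprD !addrA [l + r * x]addrC addrK subrr sub0r.
  by apply: (add_subgroupD L_group) => //; apply: ideal_core_sub.
by rewrite -t't -mulrNN; apply: L_mull.
Qed.

Lemma right_inverse_mod_ideal_core x z : ~ L x -> ideal_core L (z * x - 1) ->
  exists y, ideal_core L (x * y - 1).
Proof.
move=> Lx zx; have [t [[t' [tt' t't]] [xzt|xzt]]] := unit_near_ideal_core (x * z).
  by exists (z * t'); rewrite mulrA -tt' -mulrBl; apply: core_mulr.
have tx : ideal_core L (t * x).
  have <- : x * (z * x - 1) - (x * z - 1 - t) * x = t * x.
    by rewrite mulrBr mulr1 !mulrBl mul1r !mulrA opprB [LHS]addrC subrK.
  by apply: core_group.2; [apply: core_mull | apply: core_mulr].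
exfalso; apply: Lx; apply: ideal_core_sub.
by rewrite -[x]mul1r -t't -mulrA; apply: core_mull.
Qed.

Lemma unit_mod_ideal_core x : ~ L x -> unit_mod (ideal_core L) x.
Proof.
move=> Lx; have [z zx] := left_inverse_mod_ideal_core Lx.
have [y xy] := right_inverse_mod_ideal_core Lx zx.
exact: unit_mod_left_right zx xy.
Qed.

Lemma ideal_core_maximal : maximal_ideal (ideal_core L).
Proof.
split=> //; first by move/ideal_core_sub; case: L_max.
move=> K [KG Kl Kr] coreK K1 x Kx; apply: NNPP => core_x.
have [r Lxr] := not_all_ex_not _ _ core_x.
have [y [xry _]] := unit_mod_ideal_core Lxr.
apply: K1; rewrite -(subrK (x * r * y) 1) -opprB.
apply: (add_subgroupD KG); last exact: Kr (Kr _ _ Kx).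
by apply: (add_subgroupN KG); apply: coreK.
Qed.

(* Otherwise [w] and [1 - w] would both be units modulo the core of [L]. *)
Lemma unit_sub1_maximal_left_ideal w : is_unit w -> L (w - 1).
Proof.
move=> Uw; apply: NNPP => Lw.
apply: (no_unit_pair ideal_core_maximal); exists w, (1 - w); split.
- exact: unit_mod_unit.
- by rewrite -opprB; apply: unit_modN; apply: unit_mod_ideal_core.
- by rewrite [w + _]addrC subrK subrr; case: core_group.
Qed.

Lemma two_maximal_left_ideal : L (1 + 1).
Proof.
have U : is_unit (-1 : R) by exists (-1); rewrite mulrNN mulr1.
have := add_subgroupN L_group (unit_sub1_maximal_left_ideal U).
by rewrite opprB opprK.
Qed.

End MaximalLeftIdeal.

Lemma strongly_star_clean_J_star_clean : strongly_J_star_clean star.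
Proof.
move=> a; have [e [w [aE Pe Uw ew]]] := star_clean a.
exists (1 - e), (a - (1 - e)); split.
- by rewrite addrC subrK.
- exact: projection1B.
- move=> L L_max; have [[LG LM] _ _] := L_max.
  have -> : a - (1 - e) = (w - 1) + e * (1 + 1).
    by rewrite aE mulrDr mulr1 opprB addrACA addrC.
  apply: (add_subgroupD LG); first exact: unit_sub1_maximal_left_ideal.
  by apply: LM; apply: two_maximal_left_ideal.
- have ae : a * e = e * a by rewrite aE mulrDl mulrDr Pe.1 ew.
  by rewrite mulrBr mulrBl mulr1 mul1r ae.
Qed.

End StronglyStarClean.

End Involution.

Section StronglyJStarClean.
Variables (R : pzRingType) (star : R -> R).
Implicit Type M : R -> Prop.

Lemma strongly_J_star_clean_star_clean :
  strongly_J_star_clean star -> strongly_star_clean star.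
Proof.
move=> J_clean a; have [e [u [aE Pe Ju ae]]] := J_clean (a - 1).
have ue : u * e = e * u by move: ae; rewrite aE mulrDl mulrDr Pe.1 => /addrI.
exists e, (1 + u); split=> //.
- by rewrite addrCA -aE addrC subrK.
- rewrite -[u]opprK.
  exact: jacobson_unit1B (add_subgroupN (jacobson_add_subgroup R) Ju).
- by rewrite mulrDr mulrDl mulr1 mul1r ue.
Qed.

(* Modulo [M] every element is idempotent, since [x^2 - x] lies in [J(R)];
   so every unit of [R/M] is [1] and [1 = u + v] would give [1 = 2]. *)
Lemma strongly_J_star_clean_no_unit_pair : strongly_J_star_clean star ->
  forall M, maximal_ideal M -> ~ one_sum_two_units_mod M.
Proof.
move=> J_clean M M_max [u [v [Uu Uv uv]]].
have [M_ideal M1 _] := M_max; have [MG _ _] := M_ideal.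
have idem x : M (x * x - x).
  have [e [j [-> [ee _] Jj _]]] := J_clean x.
  exact: jacobson_sub_maximal_ideal M_max (jacobson_sqrB_idem_add ee Jj).
have sum_m1 : 1 - (u + v) + (u - 1) + (v - 1) = -1.
  by rewrite -addrA [(u - 1) + _]addrACA subrKA addNKr.
apply: M1; rewrite -[1]opprK -sum_m1; apply: (add_subgroupN MG).
apply: (add_subgroupD MG); last exact: unit_mod_idem.
by apply: (add_subgroupD MG) => //; apply: unit_mod_idem.
Qed.

End StronglyJStarClean.

Theorem corollary2p5 (R : pzRingType) (star : R -> R) :
  is_involution star ->
  (strongly_J_star_clean star <->
     (strongly_star_clean star /\
      forall M : R -> Prop, maximal_ideal M -> ~ one_sum_two_units_mod M)).
Proof.
move=> star_inv; split.
  move=> J_clean; split; first exact: strongly_J_star_clean_star_clean.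
  exact: strongly_J_star_clean_no_unit_pair.
by case=> star_clean no_unit_pair; apply: strongly_star_clean_J_star_clean.
Qed.
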